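(* Let $A$ be a hypermatrix of order $n$. Then $A$ is an alternating sign hypermatrix if and only if $\Xi(A)$ is a corner-sum hypermatrix of order $n$ satisfying, for all $i,j,k\in[n]$, $\Xi(A)_{i,j,k}-\Xi(A)_{i-1,j,k}-\Xi(A)_{i,j-1,k}+\Xi(A)_{i-1,j-1,k}\in\{0,1\}$, $\Xi(A)_{i,j,k}-\Xi(A)_{i-1,j,k}-\Xi(A)_{i,j,k-1}+\Xi(A)_{i-1,j,k-1}\in\{0,1\}$, and $\Xi(A)_{i,j,k}-\Xi(A)_{i,j-1,k}-\Xi(A)_{i,j,k-1}+\Xi(A)_{i,j-1,k-1}\in\{0,1\}$.
   Context: Let $[n]=\{1,\dots,n\}$ and $[0,n]=\{0,1,\dots,n\}$. A hypermatrix of order $n$ is an integer array $A=(A_{i,j,k})_{i,j,k\in[n]}$; its lines are the $n$-tuples obtained by fixing two of the three indices (rows, columns, vertical lines). An alternating sign hypermatrix (ASHM) of order $n$ is a hypermatrix with entries in $\{0,1,-1\}$ such that in every line the nonzero entries alternate in sign, beginning and ending with $+1$. For a hypermatrix $A$ of order $n$, $\Xi(A)$ is the array indexed by $[0,n]^3$ with $\Xi(A)_{i,j,k}=\sum_{a=1}^i\sum_{b=1}^j\sum_{c=1}^k A_{a,b,c}$. A corner-sum hypermatrix of order $n$ is an integer array $C$ indexed by $[0,n]^3$ such that for all $i,j\in[0,n]$: $C_{i,j,0}=C_{i,0,j}=C_{0,i,j}=0$, $C_{i,j,n}=C_{i,n,j}=C_{n,i,j}=ij$, and for all $k\in[n]$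 each of $C_{i,j,k}-C_{i,j,k-1}$, $C_{i,k,j}-C_{i,k-1,j}$, $C_{k,i,j}-C_{k-1,i,j}$ is an integer in $\{\max(0,i+j-n),\dots,\min(i,j)\}$. *)

From mathcomp Require Import all_boot all_order all_algebra.
Set Implicit Arguments. Unset Strict Implicit. Unset Printing Implicit Defensive.
Import Order.TTheory GRing.Theory Num.Theory.
Local Open Scope ring_scope.

(* A hypermatrix of order n: an integer array; only the entries A i j k with
   i, j, k in [n] = {1,...,n} (1-based, as in the paper) are meaningful. *)
Definition hypermatrix := nat -> nat -> nat -> int.

(* Nonzero entries of a line alternate in sign, beginning and ending with +1:
   the nonzero subsequence is [:: 1; -1; 1; ...; 1] (odd length). *)
Definition alt_line (s : seq int) : bool :=
  all (fun x => (x == 0) || (x == 1) || (x == -1)) s &&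
  (let t := [seq x <- s | x != 0] in
   (t == mkseq (fun m => (-1) ^+ m) (size t)) && odd (size t)).

Definition is_ASHM (n : nat) (A : hypermatrix) : Prop :=
  (forall j k, (1 <= j <= n)%N -> (1 <= k <= n)%N ->
     alt_line [seq A i j k | i <- iota 1 n]) /\
  (forall i k, (1 <= i <= n)%N -> (1 <= k <= n)%N ->
     alt_line [seq A i j k | j <- iota 1 n]) /\
  (forall i j, (1 <= i <= n)%N -> (1 <= j <= n)%N ->
     alt_line [seq A i j k | k <- iota 1 n]).

Definition Xi (A : hypermatrix) : nat -> nat -> nat -> int :=
  fun i j k => \sum_(1 <= a < i.+1) \sum_(1 <= b < j.+1) \sum_(1 <= c < k.+1) A a b c.

Definition in_range (n i j : nat) (d : int) : bool :=
  ((i + j - n)%N%:Z <= d) && (d <= (minn i j)%:Z).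

Definition is_corner_sum (n : nat) (C : nat -> nat -> nat -> int) : Prop :=
  forall i j, (i <= n)%N -> (j <= n)%N ->
    [/\ C i j 0 = 0, C i 0 j = 0 & C 0 i j = 0] /\
    [/\ C i j n = (i * j)%N%:Z, C i n j = (i * j)%N%:Z & C n i j = (i * j)%N%:Z] /\
       (forall k, (1 <= k <= n)%N ->
          [/\ in_range n i j (C i j k - C i j k.-1),
              in_range n i j (C i k j - C i k.-1 j) &
              in_range n i j (C k i j - C k.-1 i j)]).

Definition in01 (x : int) : bool := (x == 0) || (x == 1).

(* A line is alternating iff its partial sums all lie in {0,1} and its total
   is 1.  Second differences of Xi(A) in two directions are exactly the
   partial sums of A along the lines in the third direction.  First
   differences of Xi(A) are corner sums of planar slices of A, whose rows sum
   to 1 and whose column partial sums lie in {0,1}; such a corner sum over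
   [1,i]x[1,j] is at most min(i,j), and at least i+j-n because the rows
   restricted to the complementary columns contribute at most n-j.
   Conversely, the boundary values C(.,.,n) = ij force every line sum to be
   ij - (i-1)j - i(j-1) + (i-1)(j-1) = 1. *)

From mathcomp Require Import all_boot all_order all_algebra.
From mathcomp Require Import zify.
Set Implicit Arguments. Unset Strict Implicit. Unset Printing Implicit Defensive.
Import Order.TTheory GRing.Theory Num.Theory.
Local Open Scope ring_scope.

Definition sign_entry (x : int) : bool := (x == 0) || (x == 1) || (x == -1).

(* [alt_line_from b s]: [s] is the rest of an alternating line whose entries so
   far sum to [b]; when [b] is true the next nonzero entry must be [-1]. *)
Definition alt_line_from (b : bool) (s : seq int) : bool :=
  all sign_entry s &&
  (let t := [seq x <- s | x != 0] in
   (t == mkseq (fun m => (-1) ^+ (m + b)) (size t)) && (odd (size t) != b)).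

Fixpoint running01 (b : bool) (s : seq int) : bool :=
  if s is x :: s' then in01 (b%:Z + x) && running01 (b%:Z + x == 1) s' else b.

Lemma in01_eq1_natz (y : int) : in01 y -> (y == 1 : nat)%:Z = y.
Proof. by case/orP => /eqP ->. Qed.

Lemma in01_addb_sign_entry (b : bool) (x : int) : in01 (b%:Z + x) -> sign_entry x.
Proof. by case: b; rewrite /in01 /sign_entry /= => /orP[] /eqP Hx; lia. Qed.

Lemma mkseqSl (T : Type) (f : nat -> T) n :
  mkseq f n.+1 = f 0%N :: mkseq (fun m => f m.+1) n.
Proof. by rewrite /mkseq /= -[1%N]addn0 iotaDl -map_comp. Qed.

Lemma alt_line_from_running01 b s : alt_line_from b s = running01 b s.
Proof.
elim: s b => [|x s IH] b; first by case: b.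
rewrite /alt_line_from /=.
have [-> /=|x0] := eqVneq x 0; first by rewrite addr0 -IH; case: b.
have [->|x1] := eqVneq x 1.
  rewrite mkseqSl eqseq_cons; case: b; rewrite /= ?andbF // -(IH true) /=.
  rewrite (@eq_mkseq _ _ (fun m => (-1) ^+ (m + true))) /alt_line_from /=; last first.
    by move=> m; rewrite addn0 addn1.
  by case: odd.
have [->|x_1] := eqVneq x (-1).
  rewrite mkseqSl eqseq_cons; case: b; rewrite /= ?andbF // -(IH false) /=.
  rewrite (@eq_mkseq _ _ (fun m => (-1) ^+ (m + false))) /alt_line_from /=; last first.
    by move=> m; rewrite addn0 addn1 !exprS !mulN1r opprK.
  by case: odd.
have Hx : ~~ sign_entry x by rewrite /sign_entry (negbTE x0) (negbTE x1) (negbTE x_1).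
rewrite (negbTE Hx); case H: in01 => //.
by rewrite (in01_addb_sign_entry H) in Hx.
Qed.

Lemma alt_line_running01 s : alt_line s = running01 false s.
Proof.
rewrite -alt_line_from_running01 /alt_line /alt_line_from.
rewrite (@eq_mkseq _ _ (fun m => (-1) ^+ (m + false))) => [|m]; last by rewrite addn0.
by case: odd.
Qed.

Lemma running01P b s : running01 b s <->
  (forall m, (m <= size s)%N -> in01 (b%:Z + \sum_(x <- take m s) x)) /\
  b%:Z + \sum_(x <- s) x = 1.
Proof.
elim: s b => [|x s IH] b.
  split=> [Hb|[_]]; last by rewrite big_nil addr0; case: b.
  split=> [m _|]; last by rewrite big_nil addr0; case: b Hb.
  by rewrite /= big_nil addr0; case: b Hb.
rewrite /= big_cons addrA; split.
  case/andP=> Hx /IH[Hpre Htot]; rewrite -(in01_eq1_natz Hx); split=> // [[|m] Hm].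
    by rewrite take0 big_nil addr0; case: b {Hx Hpre Htot}.
  by rewrite /= big_cons addrA -(in01_eq1_natz Hx); apply: Hpre.
move=> [Hpre Htot].
have Hx : in01 (b%:Z + x) by have := Hpre 1%N isT; rewrite /= take0 big_cons big_nil addr0.
rewrite Hx; apply/IH; rewrite (in01_eq1_natz Hx); split=> // m Hm.
by have := Hpre m.+1 Hm; rewrite /= big_cons addrA.
Qed.

Lemma sum_map_iota (f : nat -> int) k :
  \sum_(x <- [seq f c | c <- iota 1 k]) x = \sum_(1 <= c < k.+1) f c.
Proof. by rewrite big_map /index_iota subSS subn0. Qed.

Lemma alt_line_partial_sumsP (f : nat -> int) n :
  alt_line [seq f c | c <- iota 1 n] <->
  (forall k, (k <= n)%N -> in01 (\sum_(1 <= c < k.+1) f c)) /\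
  \sum_(1 <= c < n.+1) f c = 1.
Proof.
rewrite alt_line_running01 running01P size_map size_iota add0r sum_map_iota.
have prefixE k : (k <= n)%N ->
  \sum_(x <- take k [seq f c | c <- iota 1 n]) x = \sum_(1 <= c < k.+1) f c.
  by move=> Hk; rewrite -map_take take_iota (minn_idPl Hk) sum_map_iota.
split=> -[Hpre Htot]; split=> // k Hk; have := Hpre k Hk; by rewrite ?add0r prefixE.
Qed.

Lemma alt_line_of_partial_sums (f : nat -> int) n :
  (forall k, (1 <= k <= n)%N -> in01 (\sum_(1 <= c < k.+1) f c)) ->
  \sum_(1 <= c < n.+1) f c = 1 -> alt_line [seq f c | c <- iota 1 n].
Proof.
move=> Hpre Htot; apply/alt_line_partial_sumsP; split=> // -[|k] Hk.
  by rewrite big_geq.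
exact: Hpre.
Qed.

Definition rect_sum (R : zmodType) (g : nat -> nat -> R) (i j : nat) : R :=
  \sum_(1 <= a < i.+1) \sum_(1 <= b < j.+1) g a b.

Lemma sum_nat_prefix_diff (R : zmodType) (F : nat -> R) k : (0 < k)%N ->
  \sum_(1 <= c < k.+1) F c - \sum_(1 <= c < k.-1.+1) F c = F k.
Proof. by case: k => // k _; rewrite big_nat_recr //= addrAC subrr add0r. Qed.

Lemma rect_sum_diff2 (R : zmodType) (g : nat -> nat -> R) i j :
  (0 < i)%N -> (0 < j)%N ->
  rect_sum g i j - rect_sum g i.-1 j - rect_sum g i j.-1 + rect_sum g i.-1 j.-1 = g i j.
Proof.
have diffB (a b c d : R) : a - b - c + d = (a - b) - (c - d).
  by rewrite opprB addrA addrAC.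
by move=> Hi Hj; rewrite diffB /rect_sum !sum_nat_prefix_diff.
Qed.

Lemma sum_in01_bounds m1 m2 (F : nat -> int) :
  (forall x, (m1 <= x < m2)%N -> in01 (F x)) ->
  0 <= \sum_(m1 <= x < m2) F x <= (m2 - m1)%N%:Z.
Proof.
move=> HF; have F01 x : (m1 <= x < m2)%N -> 0 <= F x <= 1.
  by move/HF; case/orP => /eqP ->.
apply/andP; split.
  by rewrite big_nat_cond; apply: sumr_ge0 => x /andP[/F01 /andP[]].
rewrite -natz -[_%:R]sumr_const_nat; apply: ler_sum_nat => x /F01 /andP[_ ->] //.
Qed.

Lemma rect_sum_in_range n (P : nat -> nat -> int) :
  (forall a, (1 <= a <= n)%N ->
     (forall j, (j <= n)%N -> in01 (\sum_(1 <= b < j.+1) P a b)) /\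
     \sum_(1 <= b < n.+1) P a b = 1) ->
  (forall b, (1 <= b <= n)%N -> forall i, (i <= n)%N ->
     in01 (\sum_(1 <= a < i.+1) P a b)) ->
  forall i j, (i <= n)%N -> (j <= n)%N -> in_range n i j (rect_sum P i j).
Proof.
move=> Hrow Hcol i j Hi Hj.
have /andP[S_ge0 S_le_i] : 0 <= rect_sum P i j <= (i.+1 - 1)%N%:Z.
  by apply: sum_in01_bounds => a Ha; apply: (Hrow a _).1; lia.
have /andP[_ S_le_j] : 0 <= rect_sum P i j <= (j.+1 - 1)%N%:Z.
  by rewrite /rect_sum exchange_big_nat; apply: sum_in01_bounds => b Hb; apply: Hcol; lia.
have /andP[_ T_le] : 0 <= \sum_(j.+1 <= b < n.+1) \sum_(1 <= a < i.+1) P a b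
                       <= (n.+1 - j.+1)%N%:Z.
  by apply: sum_in01_bounds => b Hb; apply: Hcol; lia.
have S_ge : rect_sum P i j =
    i%:Z - \sum_(j.+1 <= b < n.+1) \sum_(1 <= a < i.+1) P a b.
  have -> : i%:Z = \sum_(1 <= a < i.+1) (1 : int) by rewrite sumr_const_nat subSS subn0 natz.
  rewrite exchange_big_nat -sumrB; apply: eq_big_nat => a Ha.
  rewrite -(Hrow a _).2; last by lia.
  by rewrite (@big_cat_nat _ _ _ j.+1 1 n.+1) ?addrK // ltnS.
rewrite /in_range; move: S_ge0 S_le_i S_le_j T_le S_ge.
set S := rect_sum P i j; set T := \sum_(_ <= _ < _) _.
by move=> *; apply/andP; split; lia.
Qed.

Lemma sum_rect_sum_diff2 (R : zmodType) (h : nat -> nat -> nat -> R) i j k :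
  (0 < j)%N -> (0 < k)%N ->
  \sum_(1 <= a < i.+1) rect_sum (h a) j k - \sum_(1 <= a < i.+1) rect_sum (h a) j.-1 k
  - \sum_(1 <= a < i.+1) rect_sum (h a) j k.-1
  + \sum_(1 <= a < i.+1) rect_sum (h a) j.-1 k.-1
  = \sum_(1 <= a < i.+1) h a j k.
Proof.
move=> Hj Hk; rewrite -!sumrB -big_split /=.
by apply: eq_bigr => a _; apply: rect_sum_diff2.
Qed.

Lemma natz_mul_diff2 i j : (0 < i)%N -> (0 < j)%N ->
  (i * j)%N%:Z - (i.-1 * j)%N%:Z - (i * j.-1)%N%:Z + (i.-1 * j.-1)%N%:Z = 1.
Proof. by case: i => // i; case: j => // j _ _; rewrite /=; lia. Qed.

Section XiDifferences.

Variable A : hypermatrix.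

Lemma Xi_zero i j : [/\ Xi A i j 0 = 0, Xi A i 0 j = 0 & Xi A 0 i j = 0].
Proof.
rewrite /Xi; split; last by rewrite big_geq.
  by rewrite big1 // => a _; rewrite big1 // => b _; rewrite big_geq.
by rewrite big1 // => a _; rewrite big_geq.
Qed.

Lemma Xi_diff_i i j k : (0 < i)%N ->
  Xi A i j k - Xi A i.-1 j k = rect_sum (A i) j k.
Proof. exact: sum_nat_prefix_diff. Qed.

Lemma Xi_diff_j i j k : (0 < j)%N ->
  Xi A i j k - Xi A i j.-1 k = rect_sum (fun a c => A a j c) i k.
Proof.
move=> Hj; rewrite /Xi -sumrB; apply: eq_bigr => a _.
exact: (sum_nat_prefix_diff (fun b => \sum_(1 <= c < k.+1) A a b c)).
Qed.

Lemma Xi_diff_k i j k : (0 < k)%N ->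
  Xi A i j k - Xi A i j k.-1 = rect_sum (fun a b => A a b k) i j.
Proof.
move=> Hk; rewrite /Xi -sumrB; apply: eq_bigr => a _; rewrite -sumrB.
by apply: eq_bigr => b _; apply: sum_nat_prefix_diff.
Qed.

Lemma Xi_diff_ij i j k : (0 < i)%N -> (0 < j)%N ->
  Xi A i j k - Xi A i.-1 j k - Xi A i j.-1 k + Xi A i.-1 j.-1 k =
  \sum_(1 <= c < k.+1) A i j c.
Proof. exact: (rect_sum_diff2 (fun a b => \sum_(1 <= c < k.+1) A a b c)). Qed.

Lemma Xi_diff_ik i j k : (0 < i)%N -> (0 < k)%N ->
  Xi A i j k - Xi A i.-1 j k - Xi A i j k.-1 + Xi A i.-1 j k.-1 =
  \sum_(1 <= b < j.+1) A i b k.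
Proof.
have XiE i' k' : Xi A i' j k' = \sum_(1 <= b < j.+1) rect_sum (fun a c => A a b c) i' k'.
  exact: exchange_big_nat.
by move=> Hi Hk; rewrite !XiE; apply: sum_rect_sum_diff2.
Qed.

Lemma Xi_diff_jk i j k : (0 < j)%N -> (0 < k)%N ->
  Xi A i j k - Xi A i j.-1 k - Xi A i j k.-1 + Xi A i j.-1 k.-1 =
  \sum_(1 <= a < i.+1) A a j k.
Proof. exact: sum_rect_sum_diff2. Qed.

End XiDifferences.

Lemma rect_sum_const1 i j : rect_sum (fun _ _ => 1 : int) i j = (i * j)%N%:Z.
Proof. by rewrite /rect_sum !sumr_const_nat !subSS !subn0 -mulrnA natz mulnC. Qed.

Section ASHMCornerSums.

Variables (n : nat) (A : hypermatrix).
Hypothesis HA : is_ASHM n A.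

Lemma ASHM_line_i j k : (1 <= j <= n)%N -> (1 <= k <= n)%N ->
  (forall i, (i <= n)%N -> in01 (\sum_(1 <= a < i.+1) A a j k)) /\
  \sum_(1 <= a < n.+1) A a j k = 1.
Proof. by move=> Hj Hk; apply/alt_line_partial_sumsP; case: HA => H _; apply: H. Qed.

Lemma ASHM_line_j i k : (1 <= i <= n)%N -> (1 <= k <= n)%N ->
  (forall j, (j <= n)%N -> in01 (\sum_(1 <= b < j.+1) A i b k)) /\
  \sum_(1 <= b < n.+1) A i b k = 1.
Proof. by move=> Hi Hk; apply/alt_line_partial_sumsP; case: HA => _ [H _]; apply: H. Qed.

Lemma ASHM_line_k i j : (1 <= i <= n)%N -> (1 <= j <= n)%N ->
  (forall k, (k <= n)%N -> in01 (\sum_(1 <= c < k.+1) A i j c)) /\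
  \sum_(1 <= c < n.+1) A i j c = 1.
Proof. by move=> Hi Hj; apply/alt_line_partial_sumsP; case: HA => _ [_ H]; apply: H. Qed.

Lemma ASHM_Xi_full i j : (i <= n)%N -> (j <= n)%N ->
  [/\ Xi A i j n = (i * j)%N%:Z, Xi A i n j = (i * j)%N%:Z & Xi A n i j = (i * j)%N%:Z].
Proof.
move=> Hi Hj; rewrite /Xi -rect_sum_const1; split.
- apply: eq_big_nat => a Ha; apply: eq_big_nat => b Hb.
  by apply: (ASHM_line_k _ _).2; lia.
- apply: eq_big_nat => a Ha; rewrite exchange_big_nat; apply: eq_big_nat => c Hc.
  by apply: (ASHM_line_j _ _).2; lia.
- rewrite exchange_big_nat; apply: eq_big_nat => b Hb.
  rewrite exchange_big_nat; apply: eq_big_nat => c Hc.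
  by apply: (ASHM_line_i _ _).2; lia.
Qed.

Lemma ASHM_Xi_corner_sum : is_corner_sum n (Xi A).
Proof.
move=> i j Hi Hj; split; first exact: Xi_zero.
split; first exact: ASHM_Xi_full.
move=> k Hk; split; [rewrite Xi_diff_k | rewrite Xi_diff_j | rewrite Xi_diff_i];
  try lia; apply: rect_sum_in_range => // [a Ha | b Hb m Hm].
- by apply: ASHM_line_j; lia.
- by apply: (ASHM_line_i _ _).1; lia.
- by apply: ASHM_line_k; lia.
- by apply: (ASHM_line_i _ _).1; lia.
- by apply: ASHM_line_k; lia.
- by apply: (ASHM_line_j _ _).1; lia.
Qed.

Lemma ASHM_Xi_diff2_in01 i j k :
  (1 <= i <= n)%N -> (1 <= j <= n)%N -> (1 <= k <= n)%N ->
  [/\ in01 (Xi A i j k - Xi A i.-1 j k - Xi A i j.-1 k + Xi A i.-1 j.-1 k),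
      in01 (Xi A i j k - Xi A i.-1 j k - Xi A i j k.-1 + Xi A i.-1 j k.-1) &
      in01 (Xi A i j k - Xi A i j.-1 k - Xi A i j k.-1 + Xi A i j.-1 k.-1)].
Proof.
move=> Hi Hj Hk; rewrite Xi_diff_ij ?Xi_diff_ik ?Xi_diff_jk; try lia; split.
- by apply: (ASHM_line_k _ _).1; lia.
- by apply: (ASHM_line_j _ _).1; lia.
- by apply: (ASHM_line_i _ _).1; lia.
Qed.

End ASHMCornerSums.

Lemma corner_sum_diff2_full n (C : nat -> nat -> nat -> int) : is_corner_sum n C ->
  forall i j, (1 <= i <= n)%N -> (1 <= j <= n)%N ->
  [/\ C i j n - C i.-1 j n - C i j.-1 n + C i.-1 j.-1 n = 1,
      C i n j - C i.-1 n j - C i n j.-1 + C i.-1 n j.-1 = 1 &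
      C n i j - C n i.-1 j - C n i j.-1 + C n i.-1 j.-1 = 1].
Proof.
move=> HC i j /andP[i_gt0 le_in] /andP[j_gt0 le_jn].
have le_pred m : (m <= n)%N -> (m.-1 <= n)%N by move/(leq_trans (leq_pred m)).
have [a1 a2 a3] := (HC i j le_in le_jn).2.1.
have [b1 b2 b3] := (HC i.-1 j (le_pred _ le_in) le_jn).2.1.
have [c1 c2 c3] := (HC i j.-1 le_in (le_pred _ le_jn)).2.1.
have [d1 d2 d3] := (HC i.-1 j.-1 (le_pred _ le_in) (le_pred _ le_jn)).2.1.
by split; rewrite ?(a1, a2, a3, b1, b2, b3, c1, c2, c3, d1, d2, d3) natz_mul_diff2.
Qed.

Lemma Xi_diff2_ASHM n (A : hypermatrix) :
  is_corner_sum n (Xi A) ->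
  (forall i j k, (1 <= i <= n)%N -> (1 <= j <= n)%N -> (1 <= k <= n)%N ->
     [/\ in01 (Xi A i j k - Xi A i.-1 j k - Xi A i j.-1 k + Xi A i.-1 j.-1 k),
         in01 (Xi A i j k - Xi A i.-1 j k - Xi A i j k.-1 + Xi A i.-1 j k.-1) &
         in01 (Xi A i j k - Xi A i j.-1 k - Xi A i j k.-1 + Xi A i j.-1 k.-1)]) ->
  is_ASHM n A.
Proof.
move=> HC HD; have full := corner_sum_diff2_full HC.
split; [|split]; move=> p q Hp Hq; apply: alt_line_of_partial_sums.
- by move=> m Hm; rewrite -Xi_diff_jk; try lia; have [] := HD m p q.
- by rewrite -Xi_diff_jk; try lia; have [_ _ ->] := full p q Hp Hq.
- by move=> m Hm; rewrite -Xi_diff_ik; try lia; have [] := HD p m q.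
- by rewrite -Xi_diff_ik; try lia; have [_ -> _] := full p q Hp Hq.
- by move=> m Hm; rewrite -Xi_diff_ij; try lia; have [] := HD p q m.
- by rewrite -Xi_diff_ij; try lia; have [-> _ _] := full p q Hp Hq.
Qed.

Theorem mainTheorem4 (n : nat) (A : hypermatrix) :
  is_ASHM n A <->
  (is_corner_sum n (Xi A) /\
   forall i j k, (1 <= i <= n)%N -> (1 <= j <= n)%N -> (1 <= k <= n)%N ->
     [/\ in01 (Xi A i j k - Xi A i.-1 j k - Xi A i j.-1 k + Xi A i.-1 j.-1 k),
         in01 (Xi A i j k - Xi A i.-1 j k - Xi A i j k.-1 + Xi A i.-1 j k.-1) &
         in01 (Xi A i j k - Xi A i j.-1 k - Xi A i j k.-1 + Xi A i j.-1 k.-1)]).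
Proof.
split=> [HA | [HC HD]]; last exact: Xi_diff2_ASHM.
by split; [apply: ASHM_Xi_corner_sum | apply: ASHM_Xi_diff2_in01].
Qed.
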